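(* Let $G=(I\cup C,E)$ be a split graph whose clique vertices are labelled $1,\dots,k$ so that conditions (i)–(iii) below hold, and let $w$ be the word constructed below. If $a,b\in I$ are distinct, then $a$ and $b$ do not alternate in $w$.
   Context: Words: a word over a finite set $X$ is a finite sequence of elements of $X$; for a word $u$ and $S\subseteq X$, $u|_S$ is the subsequence of $u$ consisting of all occurrences of letters of $S$; $u^R$ is the reversal of $u$. Two letters $x,y$ alternate in $u$ if $u|_{\{x,y\}}$ is of the form $xyxy\cdots$ or $yxyx\cdots$ (of even or odd length); otherwise they do not alternate. For integers $a\le b$, $[a,b]=\{a,a+1,\dots,b\}$. Setting: $G=(I\cup C,E)$ is a split graph: $C$ induces a clique, $I$ induces an independent set, and $C$ is inclusion-wise maximal, i.e. no vertex of $I$ is adjacent to all vertices of $C$. The vertices of $C$ are labelled by $1,\dots,k$ where $k=|C|$, and for all $a,b\in I$: (i) either $N(a)=[1,m]\cup[n,k]$ for some $m<n$, or $N(a)=[l,r]$ for some $l\le r$; (ii) if $N(a)=[1,m]\cup[n,k]$ ($m<n$) and $N(b)=[l,r]$ ($l\le r$), then $l>m$ or $r<n$; (iii) if $N(a)=[1,m]\cup[n,k]$ and $N(b)=[1,m']\cup[n',k]$ ($m<n$, $m'<n'$), then $m'<n$ and $m<n'$. Let $B$ be the set of $a\in I$ whose neighbourhood is an integer interval $[l_a,r_a]$, and $A=I\setminus B$; for $a\in A$ write $N(a)=[1,m_a]\cup[n_a,k]$ with $m_a<n_a$. Construction of $w$: start with $p_1=p_2=p_3=12\cdots k$. Process the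 vertices of $I$ one at a time in an arbitrary fixed order; ''replace $y$ in $p$ by $yx$'' (resp. $xy$) means replacing the unique occurrence of the letter $y$ in $p$ by the two letters $yx$ (resp. $xy$). For $a\in A$: replace $m_a$ in $p_1$ by $m_a a$, and replace $n_a$ in $p_2$ by $a n_a$. For $a\in B$: replace $l_a$ in $p_1$ by $a l_a$, and replace $r_a$ in $p_2$ by $r_a a$. After all vertices of $I$ are processed, let $d=\max(\{1\}\cup\{m_a: a\in A\})$ and replace the letter $d$ in $p_3$ by the word $d\,(p_1|_A)^R$. Finally set $w=p_1\,(p_1|_B)^R\,p_2\,p_3$ (a $3$-uniform word over $V$). *)

From mathcomp Require Import all_boot.
Set Implicit Arguments. Unset Strict Implicit. Unset Printing Implicit Defensive.

(* Letters of the word: inl i is clique vertex i (1 <= i <= k),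
   inr a is the independent vertex a. *)
Notation letter T := (nat + T)%type.

Definition in_int (a b x : nat) : bool := (a <= x) && (x <= b).

Definition is_intervalb (k : nat) (N : nat -> bool) : bool :=
  has (fun l => has (fun r => (l <= r) &&
         all (fun x => N x == in_int l r x) (iota 1 k)) (iota 1 k)) (iota 1 k).

Definition restr (T : eqType) (S : pred T) (u : seq T) : seq T := filter S u.

Definition altw (T : Type) (x y : T) (n : nat) : seq T :=
  mkseq (fun i => if odd i then y else x) n.

Definition alternate (T : eqType) (x y : T) (u : seq T) : bool :=
  let s := restr (fun z => (z == x) || (z == y)) u in
  (s == altw x y (size s)) || (s == altw y x (size s)).

Definition repl_after (V : eqType) (y x : V) (p : seq V) : seq V :=
  flatten [seq (if z == y then [:: y; x] else [:: z]) | z <- p].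
Definition repl_before (V : eqType) (y x : V) (p : seq V) : seq V :=
  flatten [seq (if z == y then [:: x; y] else [:: z]) | z <- p].

Definition base_word (T : Type) (k : nat) : seq (letter T) :=
  [seq inl i | i <- iota 1 k].

Definition step (T : eqType) (inB : T -> bool) (m n l r : T -> nat)
    (pp : seq (letter T) * seq (letter T)) (a : T) :=
  let: (p1, p2) := pp in
  if inB a then (repl_before (inl (l a)) (inr a) p1, repl_after (inl (r a)) (inr a) p2)
  else (repl_after (inl (m a)) (inr a) p1, repl_before (inl (n a)) (inr a) p2).

Definition isA (T : Type) (inB : T -> bool) (z : letter T) : bool :=
  if z is inr a then ~~ inB a else false.
Definition isB (T : Type) (inB : T -> bool) (z : letter T) : bool :=
  if z is inr a then inB a else false.

Definition word (T : eqType) (k : nat) (Iseq : seq T) (inB : T -> bool)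
    (m n l r : T -> nat) : seq (letter T) :=
  let: (p1, p2) := foldl (step inB m n l r) (base_word T k, base_word T k) Iseq in
  let d := foldr maxn 1 [seq m a | a <- Iseq & ~~ inB a] in
  let p3 := flatten [seq (if z == inl d then inl d :: rev (restr (isA inB) p1)
                           else [:: z]) | z <- base_word T k] in
  p1 ++ rev (restr (isB inB) p1) ++ p2 ++ p3.

From mathcomp Require Import all_boot zify.
Set Implicit Arguments. Unset Strict Implicit. Unset Printing Implicit Defensive.

(* Restricted to {a, b}, the word w reads s1 (s1|_B)^R s2 (s1|_A)^R, where s1 and s2 are
   the restrictions of p1 and p2, each of which is ab or ba.  An alternating word never
   repeats a letter twice in a row, but here one always does: if a, b are in B, then
   s1 s1^R repeats its middle letter; if a, b are in A, then s2 is flanked by two copies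
   of the same letter; if a is in A and b in B, the word is s1 b s2 a, and condition (ii)
   forces s1 = ab (if m_a < l_b) or s2 = ba (if r_b < n_a), because a vertex inserted at
   a smaller clique vertex ends up first. *)


Definition either (X : eqType) (x y z : X) : bool := (z == x) || (z == y).

Lemma eitherC (X : eqType) (x y : X) : either x y =1 either y x.
Proof. by move=> z; rewrite /either orbC. Qed.

Lemma altwS (X : Type) (x y : X) n : altw x y n.+1 = x :: altw y x n.
Proof.
rewrite /altw /mkseq /= -[1]addn0 iotaDl -map_comp.
by congr (_ :: _); apply: eq_map => i /=; case: (odd i).
Qed.

Lemma path_neq_altw (X : eqType) n (x y : X) :
  x != y -> path (fun u v => u != v) x (altw y x n).
Proof.
elim: n x y => [|n IHn] x y nxy //.
by rewrite altwS /= nxy IHn // eq_sym.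
Qed.

Lemma alternate_sorted_neq (X : eqType) (x y : X) u : x != y ->
  alternate x y u -> sorted (fun s t => s != t) (restr (either x y) u).
Proof.
rewrite /alternate => nxy; fold (either x y).
set s := restr _ u; case/orP=> /eqP ->; case: (size s) => [|n] //.
- by rewrite altwS /= path_neq_altw.
- by rewrite altwS /= path_neq_altw // eq_sym.
Qed.

Lemma alternateC (X : eqType) (x y : X) u : alternate x y u = alternate y x u.
Proof.
rewrite /alternate; fold (either x y) (either y x).
rewrite /restr (eq_filter (eitherC x y)).
by rewrite orbC.
Qed.

Lemma seq2_of_count1 (X : eqType) (x y : X) s : x != y -> all (either x y) s ->
  count_mem x s = 1 -> count_mem y s = 1 -> s = [:: x; y] \/ s = [:: y; x].
Proof.
move=> nxy s_xy cx cy.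
have size_s : size s = 2.
  have no_xy : count (predI (pred1 x) (pred1 y)) s = 0.
    rewrite (eq_count (a2 := pred0)) ?count_pred0 // => z /=.
    by apply: contraNF nxy => /andP [/eqP <- /eqP <-].
  have := s_xy; rewrite all_count => /eqP <-.
  have := count_predUI (pred1 x) (pred1 y) s; rewrite no_xy addn0 cx cy => sum2.
  rewrite -[2]/(1 + 1) -sum2.
  exact: eq_count.
case: s size_s s_xy cx cy => [|u [|v [|]]] //= _ /and3P [/orP [] /eqP -> /orP [] /eqP -> _].
all: by rewrite ?eqxx ?(negbTE nxy) //= eq_sym (negbTE nxy); auto.
Qed.

Lemma filter_either_uniq (X : eqType) (x y : X) s : uniq s -> x \in s -> y \in s ->
  x != y -> filter (either x y) s = [:: x; y] \/ filter (either x y) s = [:: y; x].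
Proof.
move=> s_uniq xs ys nxy; apply: seq2_of_count1 => //; first exact: filter_all.
- rewrite count_filter (eq_count (a2 := pred1 x)) ?count_uniq_mem ?xs // => z /=.
  by rewrite /either; case: eqP.
- rewrite count_filter (eq_count (a2 := pred1 y)) ?count_uniq_mem ?ys // => z /=.
  by rewrite /either orbC; case: eqP.
Qed.

Lemma filter_swap (X : Type) (P Q : pred X) s :
  filter P (filter Q s) = filter Q (filter P s).
Proof. by rewrite -!filter_predI; apply: eq_filter => z /=; rewrite andbC. Qed.

Section Insertion.
Variable V : eqType.
Implicit Types (p : seq V) (P : pred V).

Definition insert_next (before : bool) (y x : V) p :=
  if before then repl_before y x p else repl_after y x p.

Lemma count_insert_next e y x z p :
  count_mem z (insert_next e y x p) = count_mem z p + (x == z) * count_mem y p.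
Proof.
case: e; rewrite /insert_next /repl_before /repl_after.
all: elim: p => [|u p IHp] /=; rewrite ?muln0 // count_cat IHp.
all: by case: (u =P y) => [->|_] /=; rewrite ?eqxx /=; lia.
Qed.

Lemma filter_insert_next_out P e y x p :
  ~~ P x -> filter P (insert_next e y x p) = filter P p.
Proof.
move=> nPx; case: e; rewrite /insert_next /repl_before /repl_after.
all: elim: p => [|u p IHp] //=; rewrite filter_cat IHp.
all: by case: (u =P y) => [->|_] /=; rewrite ?(negbTE nPx) //; case: (P _).
Qed.

Lemma filter_insert_next_in P e y x p :
  P x -> P y -> filter P (insert_next e y x p) = insert_next e y x (filter P p).
Proof.
move=> Px Py; case: e; rewrite /insert_next /repl_before /repl_after.
all: elim: p => [|u p IHp] //=; rewrite filter_cat IHp.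
all: have [->|neq_uy] := eqVneq u y; rewrite /= ?Px ?Py /= ?eqxx //.
all: by case: (P u); rewrite /= ?(negbTE neq_uy).
Qed.

End Insertion.

Section InsertSeq.
Variables (T : eqType) (before : T -> bool) (anchor : T -> nat).
Implicit Types (p : seq (letter T)) (s : seq T) (P : pred (letter T)).

Definition insert_seq p s :=
  foldl (fun p c => insert_next (before c) (inl (anchor c)) (inr c) p) p s.

Lemma count_insert_seq_inr p s a :
    (forall c, c \in s -> count_mem (inl (anchor c)) p = 1) ->
  count_mem (inr a) (insert_seq p s) = count_mem (inr a) p + count_mem a s.
Proof.
elim: s p => [|c s IHs] p anchor1 /=; first by rewrite addn0.
rewrite IHs => [|c' c's]; last first.
  by rewrite count_insert_next /= mul0n addn0 anchor1 // inE c's orbT.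
rewrite count_insert_next anchor1 ?mem_head // muln1 -addnA.
by congr (_ + _); rewrite [c == a]eq_sym; case: eqP.
Qed.

Lemma filter_insert_seq P p s :
    (forall c, c \in s -> P (inr c) -> P (inl (anchor c))) ->
  filter P (insert_seq p s) = insert_seq (filter P p) [seq c <- s | P (inr c)].
Proof.
elim: s p => [|c s IHs] p anchorP //=.
have anchorP' : forall c', c' \in s -> P (inr c') -> P (inl (anchor c')).
  by move=> c' c's; apply: anchorP; rewrite inE c's orbT.
case Pc: (P (inr c)) => /=; rewrite IHs //.
  by rewrite filter_insert_next_in // anchorP ?mem_head.
by rewrite filter_insert_next_out ?Pc.
Qed.

End InsertSeq.

Lemma count_base_word_inl (T : eqType) k i :
  count_mem (inl i) (base_word T k) = (1 <= i <= k).
Proof.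
rewrite count_map (eq_count (a2 := pred1 i)) // count_uniq_mem ?iota_uniq //.
by rewrite mem_iota; case: i => //= i; rewrite add1n ltnS.
Qed.

Lemma count_base_word_inr (T : eqType) k (a : T) :
  count_mem (inr a) (base_word T k) = 0.
Proof. by rewrite count_map; elim: (iota 1 k). Qed.

Lemma filter_base_word_pair (T : eqType) k i j : 1 <= i -> i < j -> j <= k ->
  filter (either (inl i) (inl j)) (base_word T k) = [:: inl i; inl j].
Proof.
move=> i_ge1 lt_ij j_lek.
rewrite filter_map (_ : [:: inl i; inl j] = map inl [:: i; j]) //.
congr map; apply: (irr_sorted_eq ltn_trans ltnn).
- by apply: sorted_filter; [exact: ltn_trans | exact: iota_ltn_sorted].
- by rewrite /= lt_ij.
move=> x; rewrite mem_filter mem_iota !inE /either /=.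
rewrite !(inj_eq inl_inj); case: eqP => [->|_]; case: eqP => [->|_] /=; lia.
Qed.

Section BaseInsertion.
Variables (T : eqType) (before : T -> bool) (anchor : T -> nat) (k : nat) (s : seq T).
Hypotheses (s_uniq : uniq s) (anchor_range : forall c, c \in s -> 1 <= anchor c <= k).
Variables (a b : T).
Hypotheses (a_s : a \in s) (b_s : b \in s) (neq_ab : a != b).

Let p := insert_seq before anchor (base_word T k) s.

Lemma insert_seq_pair :
  filter (either (inr a) (inr b)) p = [:: inr a; inr b] \/
  filter (either (inr a) (inr b)) p = [:: inr b; inr a].
Proof.
have anchor_once c : c \in s -> count_mem (inl (anchor c)) (base_word T k) = 1.
  by move=> c_s; rewrite count_base_word_inl anchor_range.
have count1 c : c \in s -> count_mem (inr c) p = 1.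
  move=> c_s; rewrite count_insert_seq_inr // count_base_word_inr.
  by rewrite count_uniq_mem ?c_s.
apply: seq2_of_count1; first by rewrite (inj_eq inr_inj).
- exact: filter_all.
- rewrite count_filter (eq_count (a2 := pred1 (inr a))) ?count1 // => z /=.
  by rewrite /either; case: eqP.
- rewrite count_filter (eq_count (a2 := pred1 (inr b))) ?count1 // => z /=.
  by rewrite /either orbC; case: eqP.
Qed.

Lemma insert_seq_order : anchor a < anchor b ->
  filter (either (inr a) (inr b)) p = [:: inr a; inr b].
Proof.
move=> lt_ab.
(* Keeping only a, b and their two anchors commutes with the insertions, which reduces
   the claim to inserting a and b into the two-letter word [anchor a; anchor b]. *)
pose P := predU (either (inr a) (inr b)) (either (inl (anchor a)) (inl (anchor b))).
have -> : filter (either (inr a) (inr b)) p = filter (either (inr a) (inr b)) (filter P p).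
  by rewrite -filter_predI; apply: eq_filter => z /=; case: (either _ _ z).
rewrite filter_insert_seq => [|c _]; last first.
  by rewrite /P /= /either !(inj_eq inr_inj) => /orP [/orP [] /eqP ->|//]; rewrite eqxx ?orbT.
have -> : filter P (base_word T k) = [:: inl (anchor a); inl (anchor b)].
  rewrite -(@filter_base_word_pair T k) ?(andP (anchor_range b_s)).2 //; last first.
    by case/andP: (anchor_range a_s).
  by apply: eq_in_filter => _ /mapP [x _ ->].
rewrite (eq_filter (a2 := either a b)) => [|c]; last first.
  by rewrite /P /= /either !(inj_eq inr_inj) !orbF.
have neq_ba : (b == a) = false by rewrite eq_sym (negbTE neq_ab).
case: (filter_either_uniq s_uniq a_s b_s neq_ab) => ->; rewrite /insert_seq /=.
all: case: (before a); case: (before b).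
all: rewrite /insert_next /repl_before /repl_after /either.
all: by do 3! rewrite /= ?eqE /= ?eqxx ?(ltn_eqF lt_ab) ?(gtn_eqF lt_ab) ?(negbTE neq_ab) ?neq_ba.
Qed.

End BaseInsertion.

Lemma foldr_maxn1_range (L : seq nat) k :
  1 <= k -> all (fun x => x <= k) L -> 1 <= foldr maxn 1 L <= k.
Proof.
move=> k_ge1; elim: L => [|x L IHL] /=; first by rewrite k_ge1.
by case/andP=> x_le /IHL /andP [ge1 le]; rewrite leq_max ge1 orbT geq_max x_le.
Qed.

Lemma filter_expand_letter (T : eqType) (Q : pred (letter T)) (s : seq nat) d u :
    (forall i, Q (inl i) = false) -> uniq s ->
  filter Q (flatten [seq (if z == inl d then inl d :: u else [:: z]) | z <- map inl s])
  = if d \in s then filter Q u else [::].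
Proof.
move=> Q_inl; elim: s => [|x s IHs] //= /andP [x_s s_uniq].
rewrite filter_cat IHs // inE (inj_eq inl_inj) eq_sym.
have [<-|_] /= := eqVneq x d; last by rewrite Q_inl.
by rewrite Q_inl (negbTE x_s) cats0.
Qed.

Section Word.
Variables (T : eqType) (k : nat) (Iseq : seq T) (inB : T -> bool) (m n l r : T -> nat).

Definition left_anchor c := if inB c then l c else m c.
Definition right_anchor c := if inB c then r c else n c.

Definition word_p1 := insert_seq inB left_anchor (base_word T k) Iseq.
Definition word_p2 := insert_seq (fun c => ~~ inB c) right_anchor (base_word T k) Iseq.

Lemma foldl_step p q s : foldl (step inB m n l r) (p, q) s =
  (insert_seq inB left_anchor p s, insert_seq (fun c => ~~ inB c) right_anchor q s).
Proof.
elim: s p q => [|c s IHs] p q //=.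
by rewrite /step /left_anchor /right_anchor; case: (inB c); rewrite IHs.
Qed.

Hypotheses (Iseq_uniq : uniq Iseq) (k_ge1 : 0 < k).
Hypothesis left_range : forall c, c \in Iseq -> 1 <= left_anchor c <= k.
Hypothesis right_range : forall c, c \in Iseq -> 1 <= right_anchor c <= k.

Lemma restr_word a b :
  let restr_ab := restr (either (inr a) (inr b)) in
  restr_ab (word k Iseq inB m n l r) =
  restr_ab word_p1 ++ rev (restr (isB inB) (restr_ab word_p1)) ++
  restr_ab word_p2 ++ rev (restr (isA inB) (restr_ab word_p1)).
Proof.
move=> restr_ab; rewrite /word foldl_step -/word_p1 -/word_p2 /restr_ab /restr.
rewrite !filter_cat !filter_rev filter_expand_letter ?iota_uniq // mem_iota add1n ltnS.
rewrite foldr_maxn1_range //; last first.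
  apply/allP => x /mapP [c]; rewrite mem_filter => /andP [Ac c_I] ->.
  by have := left_range c_I; rewrite /left_anchor (negbTE Ac) => /andP [].
by rewrite filter_rev (filter_swap _ (isB inB)) (filter_swap _ (isA inB)).
Qed.

Hypothesis mixed_anchor_order : forall a b, a \in Iseq -> b \in Iseq -> ~~ inB a -> inB b ->
  left_anchor a < left_anchor b \/ right_anchor b < right_anchor a.

Lemma word_not_alternate a b : a \in Iseq -> b \in Iseq -> a != b ->
  ~~ alternate (inr a) (inr b) (word k Iseq inB m n l r).
Proof.
move=> a_I b_I neq_ab.
wlog B_imp : a b a_I b_I neq_ab / inB a ==> inB b => [hyp|].
  case/boolP: (inB a ==> inB b) => [|BA]; first exact: hyp.
  rewrite alternateC; apply: hyp; rewrite 1?eq_sym //.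
  by move: BA; case: (inB a); case: (inB b).
have neq_inr : inr a != inr b :> letter T by rewrite (inj_eq inr_inj).
apply: (contra (alternate_sorted_neq neq_inr)).
rewrite restr_word /word_p1 /word_p2 /restr.
have pair1 := insert_seq_pair inB Iseq_uniq left_range a_I b_I neq_ab.
have pair2 := insert_seq_pair (fun c => ~~ inB c) Iseq_uniq right_range a_I b_I neq_ab.
case Ba: (inB a) B_imp; case Bb: (inB b) => // _.
- by case: pair1 => ->; case: pair2 => ->; rewrite /= Ba Bb /= eqxx /= ?andbF.
- case: (mixed_anchor_order a_I b_I (negbT Ba) Bb) => [lt_left|lt_right].
  + rewrite (insert_seq_order inB Iseq_uniq left_range a_I b_I neq_ab lt_left).
    by case: pair2 => ->; rewrite /= Ba Bb /= eqxx /= ?andbF.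
  + have neq_ba : b != a by rewrite eq_sym.
    have := insert_seq_order (fun c => ~~ inB c) Iseq_uniq right_range b_I a_I neq_ba lt_right.
    rewrite -(eq_filter (eitherC (inr a) (inr b))) => ->.
    by case: pair1 => ->; rewrite /= Ba Bb /= eqxx /= ?andbF.
- by case: pair1 => ->; case: pair2 => ->; rewrite /= Ba Bb /= eqxx /= ?andbF.
Qed.

End Word.

Theorem lemma3 (T : eqType) (k : nat) (Iseq : seq T) (N : T -> nat -> bool)
    (m n l r : T -> nat)
    (* Iseq lists the vertices of I (in the fixed processing order) *)
    (Huniq : uniq Iseq)
    (* N a is the neighbourhood of a in C = {1,..,k} *)
    (HN : forall a x, a \in Iseq -> N a x -> 1 <= x <= k)
    (* C is maximal: no vertex of I is adjacent to all of C *)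
    (Hmax : forall a, a \in Iseq -> exists2 x, 1 <= x <= k & ~~ N a x)
    (* (i) with B = interval neighbourhoods, A = I \ B, and notation l_a,r_a,m_a,n_a *)
    (HB : forall a, a \in Iseq -> is_intervalb k (N a) ->
       [/\ 1 <= l a, l a <= r a, r a <= k &
           forall x, N a x = in_int (l a) (r a) x])
    (HA : forall a, a \in Iseq -> ~~ is_intervalb k (N a) ->
       [/\ 1 <= m a, m a < n a, n a <= k &
           forall x, N a x = in_int 1 (m a) x || in_int (n a) k x])
    (* (ii) *)
    (Hii : forall a b, a \in Iseq -> b \in Iseq ->
       ~~ is_intervalb k (N a) -> is_intervalb k (N b) ->
       (l b > m a) || (r b < n a))
    (* (iii) *)
    (Hiii : forall a b, a \in Iseq -> b \in Iseq ->
       ~~ is_intervalb k (N a) -> ~~ is_intervalb k (N b) ->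
       (m b < n a) && (m a < n b)) :
  forall a b, a \in Iseq -> b \in Iseq -> a != b ->
    ~~ alternate (inr a) (inr b)
         (word k Iseq (fun c => is_intervalb k (N c)) m n l r).
Proof.
set inB := fun c => is_intervalb k (N c).
have left_range c : c \in Iseq -> 1 <= left_anchor inB m l c <= k.
  rewrite /left_anchor /inB => c_I.
  by case: ifP => [/(HB c c_I)|/negbT/(HA c c_I)] [] *; apply/andP; lia.
have right_range c : c \in Iseq -> 1 <= right_anchor inB n r c <= k.
  rewrite /right_anchor /inB => c_I.
  by case: ifP => [/(HB c c_I)|/negbT/(HA c c_I)] [] *; apply/andP; lia.
move=> a b a_I b_I; apply: word_not_alternate => //.
- by have /andP [ge1 lek] := left_range a a_I; apply: leq_trans lek.
- move=> x y x_I y_I Ax By; rewrite /left_anchor /right_anchor (negbTE Ax) By.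
  by case/orP: (Hii x y x_I y_I Ax By); [left | right].
Qed.
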